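(* Let $P=\Bbbk[x_1,x_2,x_3]$ with Poisson bracket $\{x_1,x_2\}=0$, $\{x_2,x_3\}=2x_1x_2$, $\{x_3,x_1\}=x_1^2$. Then \[ \mathrm{PAut}_{\mathrm{gr}}(P)=\left\{\begin{bmatrix}a&0&0\\0&b&0\\c&d&a\end{bmatrix}: a,b\in\Bbbk^\times,\ c,d\in\Bbbk\right\},\qquad \mathrm{PR}(P)=\left\{\begin{bmatrix}1&0&0\\0&\xi&0\\0&d&1\end{bmatrix}: \xi\neq1 \text{ a root of unity},\ d\in\Bbbk\right\}. \]
   Context: $\Bbbk$ is algebraically closed of characteristic $0$; $P$ has the standard grading. A graded Poisson automorphism $\phi$ (degree-preserving bijective algebra and Lie homomorphism) is identified with the matrix $[a_{ij}]$ where $\phi(x_i)=\sum_k a_{ik}x_k$. $\mathrm{PR}(P)$ is the set of Poisson reflections: finite-order graded Poisson automorphisms $\phi$ with $\phi|_{P_1}$ having eigenvalues $1,1,\xi$ for a primitive root of unity $\xi\neq1$. *)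

From HB Require Import structures.
From mathcomp Require Import all_boot all_order all_algebra.
From mathcomp Require Import mpoly.
Set Implicit Arguments. Unset Strict Implicit. Unset Printing Implicit Defensive.
Import Order.TTheory GRing.Theory.
Local Open Scope ring_scope.

Section Defs.
Variable k : closedFieldType.
Local Notation P := {mpoly k[3]}.

Definition x1 : P := 'X_(0 : 'I_3).
Definition x2 : P := 'X_(1 : 'I_3).
Definition x3 : P := 'X_(2 : 'I_3).

Definition brmx (i j : 'I_3) : P :=
  match nat_of_ord i, nat_of_ord j with
  | 1, 2 => 2%:R * x1 * x2
  | 2, 1 => - (2%:R * x1 * x2)
  | 2, 0 => x1 ^+ 2
  | 0, 2 => - x1 ^+ 2
  | _, _ => 0
  end.

Definition pbr (f g : P) : P :=
  \sum_(i < 3) \sum_(j < 3) f^`M(i) * g^`M(j) * brmx i j.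

Definition graded_poisson_aut (phi : P -> P) : Prop :=
  phi 1 = 1 /\
  {morph phi : f g / f + g} /\
  {morph phi : f g / f * g} /\
  (forall (c : k) f, phi (c *: f) = c *: phi f) /\
  bijective phi /\
  (forall (d : nat) f, f \is d.-homog -> phi f \is d.-homog) /\
  (forall f g, phi (pbr f g) = pbr (phi f) (phi g)).

(* The matrix [a_ij] with phi(x_i) = sum_k a_ik x_k. *)
Definition autmx (phi : P -> P) : 'M[k]_3 :=
  \matrix_(i < 3, j < 3) (phi 'X_i)@_(U_(j))%MM.

Definition poisson_reflection (phi : P -> P) : Prop :=
  [/\ graded_poisson_aut phi,
      (exists n : nat, (0 < n)%N /\ forall f, iter n phi f = f)
    & exists xi : k, [/\ exists m : nat, m.-primitive_root xi,
                          xi != 1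
                        & char_poly (autmx phi) = ('X - 1) ^+ 2 * ('X - xi%:P)]].

Definition mx3 (a11 a12 a13 a21 a22 a23 a31 a32 a33 : k) : 'M[k]_3 :=
  \matrix_(i < 3, j < 3)
    nth 0 (nth [::] [:: [:: a11; a12; a13]; [:: a21; a22; a23]; [:: a31; a32; a33]] i) j.

End Defs.

(* A graded automorphism φ is the linear substitution x_i ↦ Σ_j a_ij x_j given
   by its matrix, and it preserves the bracket as soon as it does so on pairs of
   generators: both sides of φ{f,g} = {φf,φg} are φ-derivations in f and in g.
   Evaluating the three generator identities at the coordinate points, and
   using φ(x_1), φ(x_2) ≠ 0, forces a_12 = a_13 = a_23 = 0, a_33 = a_11 and,
   dividing by 3, a_21 = 0; conversely every such matrix satisfies them. For a reflection the
   characteristic polynomial (X - a)^2 (X - b) equals (X - 1)^2 (X - ξ), so a = 1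
   and b = ξ; finite order then forces c = 0, since the (3,1) entry of the m-th
   power of the matrix is m c. *)

From HB Require Import structures.
From mathcomp Require Import all_boot all_order all_algebra.
From mathcomp Require Import mpoly.
From mathcomp Require Import ring.
Import GRing.Theory.
Set Implicit Arguments.
Unset Strict Implicit.
Local Open Scope ring_scope.

Section MpolyBracket.
Variables (n : nat) (R : comNzRingType).
Local Notation P := {mpoly R[n]}.

Definition is_alg_morph (phi : P -> P) : Prop :=
  [/\ phi 1 = 1, {morph phi : f g / f + g}, {morph phi : f g / f * g}
    & forall c f, phi (c *: f) = c *: phi f].

Lemma mpoly_alg_ind (S : P -> Prop) :
  S 1 -> (forall i, S 'X_i) -> (forall f g, S f -> S g -> S (f + g)) ->
  (forall f g, S f -> S g -> S (f * g)) -> (forall c f, S f -> S (c *: f)) ->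
  forall p, S p.
Proof.
move=> S1 SX SD SM SZ.
have S0 : S 0 by rewrite -(scale0r 1); apply: SZ.
have SXn f m : S f -> S (f ^+ m).
  by move=> Sf; elim: m => [|m IH]; rewrite ?expr0 ?exprS //; apply: SM.
elim/mpolyind => [//|c m p _ _ Sp]; apply: SD => //; apply: SZ.
by rewrite mpolyXE_id; apply: (big_ind S) => // i _; apply: SXn.
Qed.

Lemma alg_morph_ext f g : is_alg_morph f -> is_alg_morph g ->
  (forall i, f 'X_i = g 'X_i) -> f =1 g.
Proof.
move=> [f1 fD fM fZ] [g1 gD gM gZ] fgX.
apply: mpoly_alg_ind => [|//|p q Ep Eq|p q Ep Eq|c p Ep].
- by rewrite f1 g1.
- by rewrite fD gD Ep Eq.
- by rewrite fM gM Ep Eq.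
- by rewrite fZ gZ Ep.
Qed.

Lemma alg_morph0 phi : is_alg_morph phi -> phi 0 = 0.
Proof. by case=> _ _ _ phiZ; rewrite -(scale0r 0) phiZ !scale0r. Qed.

Definition is_derivation_along (phi D : P -> P) : Prop :=
  [/\ {morph D : f g / f + g}, forall c f, D (c *: f) = c *: D f
    & forall f g, D (f * g) = phi f * D g + phi g * D f].

Lemma derivation_along_ext phi D1 D2 : is_alg_morph phi ->
  is_derivation_along phi D1 -> is_derivation_along phi D2 ->
  (forall i, D1 'X_i = D2 'X_i) -> D1 =1 D2.
Proof.
move=> [phi1 _ _ _] [D1D D1Z D1M] [D2D D2Z D2M] DX.
have der_1 D : (forall f g, D (f * g) = phi f * D g + phi g * D f) -> D 1 = 0.
  move=> DM; apply: (@addrI _ (D 1)).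
  by rewrite addr0 -[in RHS](mulr1 1) DM phi1 mul1r.
apply: mpoly_alg_ind => [|//|f g e1 e2|f g e1 e2|c f e].
- by rewrite (der_1 _ D1M) (der_1 _ D2M).
- by rewrite D1D D2D e1 e2.
- by rewrite D1M D2M e1 e2.
- by rewrite D1Z D2Z e.
Qed.

Lemma derivation_along_compl phi D : is_alg_morph phi ->
  is_derivation_along id D -> is_derivation_along phi (phi \o D).
Proof.
move=> [_ phiD phiM phiZ] [DD DZ DM]; split=> [f g|c f|f g] /=.
- by rewrite DD phiD.
- by rewrite DZ phiZ.
- by rewrite DM phiD !phiM.
Qed.

Lemma derivation_along_compr phi D : is_alg_morph phi ->
  is_derivation_along id D -> is_derivation_along phi (D \o phi).
Proof.
move=> [_ phiD phiM phiZ] [DD DZ DM]; split=> [f g|c f|f g] /=.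
- by rewrite phiD DD.
- by rewrite phiZ DZ.
- by rewrite phiM DM.
Qed.

Definition mbracket (B : 'I_n -> 'I_n -> P) (f g : P) : P :=
  \sum_(i < n) \sum_(j < n) f^`M(i) * g^`M(j) * B i j.

Variable B : 'I_n -> 'I_n -> P.

Lemma mbracket_derivationl g : is_derivation_along id (mbracket B ^~ g).
Proof.
split=> [f h|c f|f h]; rewrite /mbracket.
- rewrite -big_split; apply: eq_bigr => i _; rewrite -big_split.
  by apply: eq_bigr => j _; rewrite mderivD !mulrDl.
- rewrite scaler_sumr; apply: eq_bigr => i _; rewrite scaler_sumr.
  by apply: eq_bigr => j _; rewrite mderivZ -!scalerAl.
- rewrite !mulr_sumr -big_split; apply: eq_bigr => i _.
  rewrite !mulr_sumr -big_split; apply: eq_bigr => j _ /=; rewrite mderivM; ring.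
Qed.

Lemma mbracket_derivationr f : is_derivation_along id (mbracket B f).
Proof.
split=> [g h|c g|g h]; rewrite /mbracket.
- rewrite -big_split; apply: eq_bigr => i _; rewrite -big_split.
  by apply: eq_bigr => j _; rewrite mderivD mulrDr !mulrDl.
- rewrite scaler_sumr; apply: eq_bigr => i _; rewrite scaler_sumr.
  by apply: eq_bigr => j _; rewrite mderivZ -scalerAr -scalerAl.
- rewrite !mulr_sumr -big_split; apply: eq_bigr => i _.
  rewrite !mulr_sumr -big_split; apply: eq_bigr => j _ /=; rewrite mderivM; ring.
Qed.

Lemma mderivXU (i j : 'I_n) : ('X_i : P)^`M(j) = (i == j)%:R.
Proof.
rewrite mderivX mnm1E; case: eqVneq => [->|_]; last by rewrite scale0r.
by rewrite -[X in (X - _)%MM]add0m addmK mpolyX0 scale1r.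
Qed.

Lemma mbracketXX i j : mbracket B 'X_i 'X_j = B i j.
Proof.
rewrite /mbracket (bigD1 i) //= [X in _ + X]big1 => [|i' /negbTE ne]; last first.
  by apply: big1 => j' _; rewrite mderivXU eq_sym ne !mul0r.
rewrite addr0 (bigD1 j) //= [X in _ + X]big1 => [|j' /negbTE ne]; last first.
  by rewrite !mderivXU (eq_sym j) ne mulr0 mul0r.
by rewrite !mderivXU !eqxx addr0 !mul1r.
Qed.

Lemma mbracket_morph phi : is_alg_morph phi ->
  (forall i j, phi (B i j) = mbracket B (phi 'X_i) (phi 'X_j)) ->
  forall f g, phi (mbracket B f g) = mbracket B (phi f) (phi g).
Proof.
move=> phiA phiB.
have phiBX j f : phi (mbracket B f 'X_j) = mbracket B (phi f) (phi 'X_j).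
  apply: (@derivation_along_ext phi (phi \o mbracket B ^~ 'X_j)
    (mbracket B ^~ (phi 'X_j) \o phi)) => // [||i /=].
  - exact/derivation_along_compl/mbracket_derivationl.
  - exact/derivation_along_compr/mbracket_derivationl.
  - by rewrite -phiB; congr phi; apply: mbracketXX.
move=> f; apply: (@derivation_along_ext phi (phi \o mbracket B f)
  (mbracket B (phi f) \o phi)) => // [||j /=].
- exact/derivation_along_compl/mbracket_derivationr.
- exact/derivation_along_compr/mbracket_derivationr.
- exact: phiBX.
Qed.
End MpolyBracket.

Lemma mpolyXU_neq0 n (R : nzRingType) (i : 'I_n) : 'X_i != 0 :> {mpoly R[n]}.
Proof.
apply/eqP => X0; have := @mcoeffXU n R i i.
by rewrite X0 mcoeff0 eqxx => /esym/eqP; rewrite oner_eq0.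
Qed.

Section LinearSubstitution.
Variables (n : nat) (R : comNzRingType).
Local Notation P := {mpoly R[n]}.

Definition row_form (A : 'M[R]_n) (i : 'I_n) : P := \sum_(j < n) A i j *: 'X_j.

Definition mx_subst (A : 'M[R]_n) : P -> P :=
  comp_mpoly [tuple row_form A i | i < n].

HB.instance Definition _ A :=
  GRing.LRMorphism.copy (mx_subst A) (comp_mpoly [tuple row_form A i | i < n]).

Lemma mx_substX A i : mx_subst A 'X_i = row_form A i.
Proof. by rewrite /mx_subst comp_mpolyXU -tnth_nth tnth_mktuple. Qed.

Lemma mx_subst_row_form B C i : mx_subst C (row_form B i) = row_form (B *m C) i.
Proof.
rewrite raddf_sum /=; under eq_bigr do rewrite linearZ /= mx_substX.
rewrite /row_form; under eq_bigr do rewrite scaler_sumr.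
rewrite exchange_big; apply: eq_bigr => l _.
by rewrite mxE scaler_suml; apply: eq_bigr => j _; rewrite scalerA.
Qed.

Lemma mx_subst_alg_morph A : is_alg_morph (mx_subst A).
Proof. by split=> [|f g|f g|c f]; rewrite ?rmorph1 ?rmorphD ?rmorphM ?linearZ. Qed.

Lemma mx_subst_mul B C f : mx_subst C (mx_subst B f) = mx_subst (B *m C) f.
Proof.
apply: (alg_morph_ext (f := mx_subst C \o mx_subst B)) => [||i /=].
- by split=> [|g h|g h|c g] /=; rewrite ?rmorph1 ?rmorphD ?rmorphM ?linearZ.
- exact: mx_subst_alg_morph.
- by rewrite !mx_substX mx_subst_row_form.
Qed.

Lemma row_form1 i : row_form 1%:M i = 'X_i.
Proof.
rewrite /row_form (bigD1 i) //= mxE eqxx scale1r big1 ?addr0 // => j /negbTE ne.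
by rewrite mxE eq_sym ne scale0r.
Qed.

Lemma mx_subst1 f : mx_subst 1%:M f = f.
Proof.
apply: (alg_morph_ext (mx_subst_alg_morph _) (g := id)) => [|i]; first by split.
by rewrite mx_substX row_form1.
Qed.

Lemma iter_mx_subst A m f : iter m (mx_subst A) f = mx_subst (A ^+ m) f.
Proof.
elim: m => [|m IH]; first by rewrite expr0 -idmxE mx_subst1.
by rewrite iterS IH mx_subst_mul mulmxE -exprSr.
Qed.

Lemma row_form_homog A i : row_form A i \is 1.-homog.
Proof.
by apply: rpred_sum => j _; apply: dhomogZ; rewrite dhomogX; apply/eqP/mdeg1.
Qed.

Lemma mx_subst_homog A d f : f \is d.-homog -> mx_subst A f \is d.-homog.
Proof.
move=> homf; rewrite (mpolyE f) raddf_sum big_seq; apply: rpred_sum => m mf /=.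
rewrite linearZ /= /mx_subst comp_mpolyX; apply: dhomogZ.
have <- : mdeg m = d by exact: (dhomog_mf homf mf).
rewrite mdegE.
apply: (big_ind2 (fun p d => p \is d.-homog)) => [||i _].
- exact: dhomog1.
- by move=> p1 d1 p2 d2; apply: dhomogM.
- by rewrite tnth_mktuple -[X in X.-homog]mul1n dhomogMn ?row_form_homog.
Qed.

Lemma homog1_row_form (p : P) :
  p \is 1.-homog -> p = \sum_(j < n) p@_U_(j) *: 'X_j.
Proof.
move=> homp; apply/mpolyP => m; rewrite raddf_sum /=.
under eq_bigr do rewrite mcoeffZ mcoeffX.
case: (boolP (mdeg m == 1%N)) => [/mdeg1P[i /eqP->]|degm].
  rewrite (bigD1 i) //= eqxx mulr1 big1 ?addr0 // => j /negbTE ne.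
  by rewrite eq_mnm1 ne mulr0.
rewrite (dhomog_nemf_coeff homp degm) big1 // => j _.
case: eqP => [eq_m|_]; last by rewrite mulr0.
by move: degm; rewrite -eq_m mdeg1.
Qed.

Lemma mderiv_row_form A i l : (row_form A i)^`M(l) = (A i l)%:MP.
Proof.
rewrite raddf_sum /=; under eq_bigr do rewrite mderivZ mderivXU.
rewrite (bigD1 l) //= eqxx big1 ?addr0 => [|j /negbTE->]; last by rewrite scaler0.
by rewrite -mul_mpolyC mulr1.
Qed.

Lemma mbracket_row_form B A C i j : mbracket B (row_form A i) (row_form C j) =
  \sum_(a < n) \sum_(b < n) (A i a * C j b) *: B a b.
Proof.
apply: eq_bigr => a _; apply: eq_bigr => b _.
by rewrite !mderiv_row_form -mul_mpolyC mpolyCM.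
Qed.

End LinearSubstitution.

Lemma mx_subst_bij n (R : comUnitRingType) (A : 'M[R]_n) :
  A \in unitmx -> bijective (mx_subst A).
Proof.
by move=> unitA; exists (mx_subst (invmx A)) => f;
  rewrite mx_subst_mul ?mulmxV ?mulVmx // mx_subst1.
Qed.

Lemma eigenvalues_reflection (F : fieldType) (a b xi : F) : xi != 1 ->
  ('X - a%:P) * ('X - b%:P) * ('X - a%:P) = ('X - 1) ^+ 2 * ('X - xi%:P) ->
  a = 1 /\ b = xi.
Proof.
move=> xi_neq1 eq_cp.
have /permP cnt : perm_eq [:: a; b; a] [:: 1; 1; xi].
  apply: prod_XsubC_eq; rewrite !big_cons big_nil !mulr1 polyC1 mulrA eq_cp.
  by rewrite expr2 mulrA.
have a1 : a = 1.
  move: (cnt (pred1 1)) => /=; rewrite eqxx (negbTE xi_neq1).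
  by case: eqP => // _; case: eqP.
split=> //; move: (cnt (pred1 xi)) => /=.
by rewrite a1 eqxx (eq_sym 1) (negbTE xi_neq1); case: eqP.
Qed.

Local Notation i0 := (@Ordinal 3 0 isT).
Local Notation i1 := (@Ordinal 3 1 isT).
Local Notation i2 := (@Ordinal 3 2 isT).

Lemma ord3_ind (S : 'I_3 -> Prop) : S i0 -> S i1 -> S i2 -> forall i, S i.
Proof.
by move=> S0 S1 S2 [[|[|[|//]]] lti]; [move: S0 | move: S1 | move: S2];
  congr S; apply: val_inj.
Qed.

Lemma big_ord3 (T : Type) (idx : T) (op : Monoid.law idx) (F : 'I_3 -> T) :
  \big[op/idx]_(i < 3) F i = op (op (F i0) (F i1)) (F i2).
Proof.
rewrite !big_ord_recl big_ord0 Monoid.mulm1 Monoid.mulmA.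
by congr (op (op (F _) (F _)) (F _)); apply: val_inj.
Qed.

Section PoissonAutomorphisms.
Variable k : closedFieldType.
Local Notation P := {mpoly k[3]}.

Lemma x1E : x1 k = 'X_i0. Proof. by []. Qed.
Lemma x2E : x2 k = 'X_i1. Proof. by []. Qed.

Lemma pbr_mbracket : @pbr k = mbracket (brmx k).
Proof. by []. Qed.

Lemma mx3E (A : 'M[k]_3) :
  A = mx3 (A i0 i0) (A i0 i1) (A i0 i2) (A i1 i0) (A i1 i1) (A i1 i2)
          (A i2 i0) (A i2 i1) (A i2 i2).
Proof. by apply/matrixP; elim/ord3_ind => /=; elim/ord3_ind; rewrite mxE. Qed.

Lemma autmx_mx_subst (A : 'M[k]_3) : autmx (mx_subst A) = A.
Proof.
apply/matrixP => i j; rewrite mxE mx_substX raddf_sum /= (bigD1 j) //=.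
rewrite mcoeffZ mcoeffXU eqxx mulr1 big1 ?addr0 // => l /negbTE ne.
by rewrite mcoeffZ mcoeffXU ne mulr0.
Qed.

Lemma eq_autmx (f g : P -> P) : f =1 g -> autmx f = autmx g.
Proof. by move=> fg; apply/matrixP => i j; rewrite !mxE fg. Qed.

Lemma graded_poisson_aut_subst (phi : P -> P) :
  graded_poisson_aut phi -> phi =1 mx_subst (autmx phi).
Proof.
move=> [phi1 [phiD [phiM [phiZ [_ [phi_homog _]]]]]].
apply: (alg_morph_ext _ (mx_subst_alg_morph _)) => [|i]; first by split.
have /homog1_row_form-> : phi 'X_i \is 1.-homog.
  by apply: phi_homog; rewrite dhomogX; apply/eqP/mdeg1.
by rewrite mx_substX; apply: eq_bigr => j _; rewrite mxE.
Qed.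

Lemma pbr_row_form (A C : 'M[k]_3) i j :
  pbr (row_form A i) (row_form C j) =
  (A i i1 * C j i2 - A i i2 * C j i1) *: brmx k i1 i2 +
  (A i i2 * C j i0 - A i i0 * C j i2) *: brmx k i2 i0.
Proof.
rewrite pbr_mbracket mbracket_row_form !big_ord3 /= /brmx /=.
rewrite -!mul_mpolyC !mpolyCB !mpolyCM; ring.
Qed.

Definition poisson_on_gens (A : 'M[k]_3) : Prop :=
  forall i j, mx_subst A (brmx k i j) = pbr (row_form A i) (row_form A j).

Lemma graded_poisson_aut_gens (phi : P -> P) :
  graded_poisson_aut phi -> poisson_on_gens (autmx phi).
Proof.
move=> gpa_phi i j; have phiE := graded_poisson_aut_subst gpa_phi.
case: gpa_phi => _ [_ [_ [_ [_ [_ phi_pbr]]]]].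
by rewrite -phiE -!mx_substX -!phiE -phi_pbr pbr_mbracket mbracketXX.
Qed.

Lemma mx_subst_graded_poisson_aut (A : 'M[k]_3) :
  A \in unitmx -> poisson_on_gens A -> graded_poisson_aut (mx_subst A).
Proof.
move=> unitA gensA; have [phi1 phiD phiM phiZ] := mx_subst_alg_morph A.
do 4!split=> //; split; first exact: mx_subst_bij.
split=> [d f|]; first exact: mx_subst_homog.
rewrite pbr_mbracket; apply: mbracket_morph; first exact: mx_subst_alg_morph.
by move=> i j; rewrite !mx_substX; apply: gensA.
Qed.

Lemma poisson_on_gens_mx3 a b c d : poisson_on_gens (mx3 a 0 0 0 b 0 c d a).
Proof.
move=> i j; rewrite pbr_row_form.
elim/ord3_ind: i; elim/ord3_ind: j;
  rewrite /brmx /= ?rmorphN ?rmorphM ?rmorphXn ?rmorph_nat ?x1E ?x2E /=;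
  rewrite ?mx_substX /row_form ?big_ord3 /= /mx3 ?mxE /=;
  rewrite -!mul_mpolyC ?mpolyCB ?mpolyCM ?mpolyC0; ring.
Qed.

Definition basis_pt (l : 'I_3) : 'I_3 -> k := fun t => (t == l)%:R.

Lemma meval_basis_row_form A l i : meval (basis_pt l) (row_form A i) = A i l.
Proof.
rewrite raddf_sum (bigD1 l) //= mevalZ mevalXU /basis_pt eqxx mulr1.
by rewrite big1 ?addr0 // => j /negbTE ne; rewrite mevalZ mevalXU ne mulr0.
Qed.

Lemma meval_basis_pbr (A : 'M[k]_3) l i j :
  meval (basis_pt l) (pbr (row_form A i) (row_form A j)) =
  (l == i0)%:R * (A i i2 * A j i0 - A i i0 * A j i2).
Proof.
rewrite pbr_row_form /brmx /= expr2 mevalD !mevalZ !mevalM -mpolyC_nat mevalC.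
by rewrite !mevalXU /basis_pt; elim/ord3_ind: l => /=; ring.
Qed.

Lemma poisson_on_gens_shape (A : 'M[k]_3) : (3%:R : k) != 0 ->
  poisson_on_gens A -> (forall i, row_form A i != 0) ->
  exists a b c d, [/\ a != 0, b != 0 & A = mx3 a 0 0 0 b 0 c d a].
Proof.
move=> three_neq0 gensA rowA.
have ev l i j : meval (basis_pt l) (mx_subst A (brmx k i j)) =
    (l == i0)%:R * (A i i2 * A j i0 - A i i0 * A j i2).
  by rewrite gensA meval_basis_pbr.
have := ev i0 i1 i2; have := ev i0 i0 i1; have := ev i0 i2 i0.
have := ev i2 i2 i0; have := ev i1 i2 i0.
rewrite /brmx /= ?rmorphN ?rmorphM ?rmorphXn ?rmorph_nat ?x1E ?x2E /= !mx_substX.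
rewrite ?rmorph0 ?rmorphN ?rmorphM ?rmorphXn ?rmorph_nat /= !meval_basis_row_form.
rewrite !mul0r !mul1r => /eqP + /eqP.
rewrite !mulf_eq0 !orbb => /eqP A01 /eqP A02.
have a_neq0 : A i0 i0 != 0.
  apply: contraNneq (rowA i0) => a0.
  by rewrite /row_form big_ord3 /= a0 A01 A02 !scale0r !addr0.
rewrite A02 mulr0 subr0 => /(mulIf a_neq0) A22.
rewrite mul0r sub0r => /esym/eqP; rewrite oppr_eq0 mulf_eq0 (negbTE a_neq0).
move=> /eqP A12; rewrite A12 mul0r sub0r -A22 => e12.
have A10 : A i1 i0 = 0.
  have : 3%:R * A i0 i0 * A i1 i0 = 0.
    by transitivity (2 * A i0 i0 * A i1 i0 + A i1 i0 * A i0 i0);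
      [ring | rewrite e12 addNr].
  by move/eqP; rewrite !mulf_eq0 (negbTE three_neq0) (negbTE a_neq0) => /eqP.
have b_neq0 : A i1 i1 != 0.
  apply: contraNneq (rowA i1) => b0.
  by rewrite /row_form big_ord3 /= b0 A10 A12 !scale0r !addr0.
exists (A i0 i0), (A i1 i1), (A i2 i0), (A i2 i1); split=> //.
by rewrite [LHS]mx3E A01 A02 A10 A12 -A22.
Qed.

Lemma mx3_trig (a b c d : k) : is_trig_mx (mx3 a 0 0 0 b 0 c d a).
Proof. by apply/is_trig_mxP; elim/ord3_ind; elim/ord3_ind; rewrite mxE. Qed.

Lemma graded_poisson_aut_mx3 (phi : P -> P) : (3%:R : k) != 0 ->
  graded_poisson_aut phi ->
  exists a b c d, [/\ a != 0, b != 0 & autmx phi = mx3 a 0 0 0 b 0 c d a].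
Proof.
move=> three_neq0 gpa_phi; apply: poisson_on_gens_shape => // [|i].
  exact: graded_poisson_aut_gens.
have [phi1 [phiD [phiM [phiZ [[psi phiK _] _]]]]] := gpa_phi.
rewrite -mx_substX -(graded_poisson_aut_subst gpa_phi).
apply: contra_neq (@mpolyXU_neq0 3 k i) => phiX0.
have phi0 : phi 0 = 0 by apply: alg_morph0; split.
by rewrite -[LHS]phiK phiX0 -{1}phi0 phiK.
Qed.

Lemma mx3_graded_poisson_aut (a b c d : k) : a != 0 -> b != 0 ->
  graded_poisson_aut (mx_subst (mx3 a 0 0 0 b 0 c d a)).
Proof.
move=> a_neq0 b_neq0; apply: mx_subst_graded_poisson_aut.
  rewrite unitmxE unitfE det_trig ?mx3_trig // big_ord3 /= /mx3 !mxE /=.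
  by rewrite !mulf_neq0.
exact: poisson_on_gens_mx3.
Qed.

Lemma mx3_1 : mx3 1 0 0 0 1 0 0 0 1 = 1 :> 'M[k]_3.
Proof. by apply/matrixP; elim/ord3_ind; elim/ord3_ind; rewrite !mxE. Qed.

Lemma mx3_unipotent_expr (b c d : k) m :
  (mx3 1 0 0 0 b 0 c d 1) ^+ m =
  mx3 1 0 0 0 (b ^+ m) 0 (c *+ m) (d * \sum_(i < m) b ^+ i) 1.
Proof.
elim: m => [|m IH]; first by rewrite expr0 big_ord0 mulr0 mulr0n mx3_1.
rewrite exprS IH big_ord_recr /= -mulmxE.
by apply/matrixP; elim/ord3_ind; elim/ord3_ind;
  rewrite !mxE big_ord3 /= !mxE /= ?exprS; ring.
Qed.

Lemma char_poly_mx3 (a b c d : k) :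
  char_poly (mx3 a 0 0 0 b 0 c d a) = ('X - a%:P) * ('X - b%:P) * ('X - a%:P).
Proof. by rewrite char_poly_trig ?mx3_trig // big_ord3 /mx3 !mxE. Qed.

Lemma iter_mx_subst_id (A : 'M[k]_3) m :
  (forall f, iter m (mx_subst A) f = f) <-> A ^+ m = 1.
Proof.
split=> [iterK | Am1 f]; last by rewrite iter_mx_subst Am1 -idmxE mx_subst1.
rewrite -idmxE -(autmx_mx_subst (A ^+ m)) -(autmx_mx_subst 1%:M).
by apply: eq_autmx => f; rewrite -iter_mx_subst iterK mx_subst1.
Qed.

Lemma poisson_reflection_mx3 (phi : P -> P) : [pchar k] =i pred0 ->
  poisson_reflection phi ->
  exists xi d : k, [/\ (exists m, (0 < m)%N /\ xi ^+ m = 1), xi != 1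
                     & autmx phi = mx3 1 0 0 0 xi 0 0 d 1].
Proof.
move=> /pcharf0P char0 [gpa_phi [m [m_gt0 iterK]] [xi [_ xi_neq1 cp]]].
have three_neq0 : (3%:R : k) != 0 by rewrite char0.
have [a [b [c [d [_ _ Aphi]]]]] := graded_poisson_aut_mx3 three_neq0 gpa_phi.
rewrite Aphi char_poly_mx3 in cp; have [a1 bxi] := eigenvalues_reflection xi_neq1 cp.
have : autmx phi ^+ m = 1.
  apply/iter_mx_subst_id => f.
  by rewrite -(eq_iter (graded_poisson_aut_subst gpa_phi)) iterK.
rewrite Aphi a1 bxi mx3_unipotent_expr -mx3_1 => Am1.
have /= := congr1 (fun M : 'M_3 => M i1 i1) Am1.
have /= := congr1 (fun M : 'M_3 => M i2 i0) Am1.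
rewrite /mx3 !mxE /= => /eqP cm xim.
have c0 : c = 0.
  by move: cm; rewrite -mulr_natr mulf_eq0 char0 (gtn_eqF m_gt0) orbF => /eqP.
by exists xi, d; split=> //; [exists m | rewrite c0].
Qed.

Lemma mx3_poisson_reflection (xi d : k) m : (0 < m)%N -> xi ^+ m = 1 ->
  xi != 1 -> poisson_reflection (mx_subst (mx3 1 0 0 0 xi 0 0 d 1)).
Proof.
move=> m_gt0 xim xi_neq1.
have xi_neq0 : xi != 0.
  apply/eqP => xi0; move: xim; rewrite xi0 expr0n gtn_eqF // => /esym/eqP.
  by rewrite oner_eq0.
split.
- exact: mx3_graded_poisson_aut (oner_neq0 k) xi_neq0.
- exists m; split=> //; apply/iter_mx_subst_id; rewrite mx3_unipotent_expr xim mul0rn.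
  have /eqP := subrX1 xi m; rewrite xim subrr eq_sym mulf_eq0 subr_eq0 (negbTE xi_neq1).
  by move=> /eqP->; rewrite mulr0 mx3_1.
- have [p p_prim _] := prim_order_exists m_gt0 xim.
  exists xi; split=> //; first by exists p.
  by rewrite autmx_mx_subst char_poly_mx3 polyC1 mulrAC -expr2.
Qed.

End PoissonAutomorphisms.

Theorem lemma3p2p1 (k : closedFieldType) (char0 : [pchar k] =i pred0) :
  (forall A : 'M[k]_3,
     (exists phi : {mpoly k[3]} -> {mpoly k[3]},
        graded_poisson_aut phi /\ autmx phi = A)
     <->
     (exists a b c d : k, [/\ a != 0, b != 0 & A = mx3 a 0 0 0 b 0 c d a]))
  /\
  (forall A : 'M[k]_3,
     (exists phi : {mpoly k[3]} -> {mpoly k[3]},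
        poisson_reflection phi /\ autmx phi = A)
     <->
     (exists xi d : k, [/\ (exists m : nat, (0 < m)%N /\ xi ^+ m = 1),
                          xi != 1
                        & A = mx3 1 0 0 0 xi 0 0 d 1])).
Proof.
have three_neq0 : (3%:R : k) != 0 by move/pcharf0P: char0 => ->.
split=> A; split.
- by move=> [phi [gpa_phi <-]]; apply: graded_poisson_aut_mx3.
- move=> [a [b [c [d [a_neq0 b_neq0 ->]]]]].
  by exists (mx_subst (mx3 a 0 0 0 b 0 c d a));
    rewrite autmx_mx_subst; split=> //; apply: mx3_graded_poisson_aut.
- by move=> [phi [refl_phi <-]]; apply: poisson_reflection_mx3.
- move=> [xi [d [[m [m_gt0 xim]] xi_neq1 ->]]].
  by exists (mx_subst (mx3 1 0 0 0 xi 0 0 d 1));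
    rewrite autmx_mx_subst; split=> //; apply: (mx3_poisson_reflection _ m_gt0).
Qed.
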